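(* Let $\Omega\subset\mathbb{R}^2$ be a compact set that can be covered by at most $|\Omega|+\epsilon_1$ squares $Q_1(m)$, $m\in\mathbb{Z}^2$, for some $\epsilon_1\ge0$. Let $\Lambda_\Omega=\{\lambda_j\}_{j=1}^r$ be a finite sequence of independent and identically distributed random variables uniformly distributed in $\Omega$, let $N_0=\sup_{m\in\mathbb{Z}^2}\#(\Lambda_\Omega\cap Q_1(m))$, and let $a>|\Omega|^{-1}$. Then $$\mathbb{P}(N_0>ar)\le(|\Omega|+\epsilon_1)\exp\Big(-r\big(a\ln(a|\Omega|)-(a-|\Omega|^{-1})\big)\Big).$$
   Context: $Q_1(m)=[m_1-\tfrac12,m_1+\tfrac12]\times[m_2-\tfrac12,m_2+\tfrac12]$ for $m=(m_1,m_2)\in\mathbb{Z}^2$; $|\Omega|$ is the Lebesgue measure of $\Omega$. *)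

From HB Require Import structures.
From mathcomp Require Import all_boot all_order all_algebra.
From mathcomp Require Import all_classical all_reals all_analysis.
Set Implicit Arguments. Unset Strict Implicit. Unset Printing Implicit Defensive.
Import Order.TTheory GRing.Theory Num.Theory.
Import numFieldNormedType.Exports.
Local Open Scope classical_set_scope.
Local Open Scope ring_scope.

Definition leb2 (R : realType) : set (R * R) -> \bar R :=
  ((@lebesgue_measure R) \x (@lebesgue_measure R))%E.

(* |Omega| as a real number (finite for the compact sets considered). *)
Definition area (R : realType) (A : set (R * R)) : R := fine (leb2 A).

Definition Q1 (R : realType) (m : int * int) : set (R * R) :=
  [set x | (m.1%:~R - 2^-1 <= x.1 <= m.1%:~R + 2^-1) /\
           (m.2%:~R - 2^-1 <= x.2 <= m.2%:~R + 2^-1)].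

Definition covered_by_at_most (R : realType) (Omega : set (R * R)) (K : R) :=
  exists M : seq (int * int),
    Omega `<=` \bigcup_(m in [set m | m \in M]) @Q1 R m /\ (size M)%:R <= K.

Definition count_in (R : realType) (T : Type) (r : nat)
  (lam : 'I_r -> T -> R * R) (m : int * int) (w : T) : nat :=
  #|[set j : 'I_r | `[< @Q1 R m (lam j w) >] ]|.

Definition N0 (R : realType) (T : Type) (r : nat)
  (lam : 'I_r -> T -> R * R) (w : T) : R :=
  sup [set (count_in lam m w)%:R | m in [set: int * int]].

Definition uniform_in (R : realType) d (T : measurableType d)
  (P : probability T R) (X : T -> R * R) (Omega : set (R * R)) :=
  measurable_fun setT X /\
  forall A : set (R * R), measurable A ->
    P (X @^-1` A) = (area (A `&` Omega) / area Omega)%:E.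

Definition mutually_independent (R : realType) d (T : measurableType d)
  (P : probability T R) (r : nat) (lam : 'I_r -> T -> R * R) :=
  forall B : 'I_r -> set (R * R), (forall j, measurable (B j)) ->
    P [set w | forall j, B j (lam j w)] =
    (\prod_(j < r) fine (P (lam j @^-1` B j)))%:E.

From HB Require Import structures.
From mathcomp Require Import all_boot all_order all_algebra.
From mathcomp Require Import all_classical all_reals all_analysis.
Import Order.TTheory GRing.Theory Num.Theory.
Import numFieldNormedType.Exports.
Local Open Scope classical_set_scope.
Local Open Scope ring_scope.
From mathcomp Require Import zify ring lra.

(* Fix a unit square Q_1(m).  The lambda_j fall into it
   independently, each with probability p = |Q_1(m) cap Omega| / |Omega|,
   and p <= 1/|Omega| because |Q_1(m)| = 1.  Chernoff's bound with
   e^t = a |Omega| then gives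
   P(#(Lambda cap Q_1(m)) > a r) <= exp(-r (a ln(a |Omega|) - (a - 1/|Omega|))).
   Since square boundaries are Lebesgue-null, almost surely every lambda_j lies
   in the interior of one of the covering squares, and a point interior to a
   covering square belongs to no other Q_1(m).  Hence N_0 > a r forces one of
   the at most |Omega| + eps_1 covering squares to receive more than a r
   points, and a union bound over them concludes. *)

Lemma le_measure_bigsetU {d} {T : ringOfSetsType d} {R : realFieldType}
    (mu : {measure set T -> \bar R}) {I : Type} {s : seq I} {P : pred I}
    {F : I -> set T} :
  (forall i, P i -> measurable (F i)) ->
  (mu (\big[setU/set0]_(i <- s | P i) F i) <= \sum_(i <- s | P i) mu (F i))%E.
Proof.
move=> mF; elim: s => [|i s IH]; first by rewrite !big_nil measure0.
rewrite !big_cons; case: ifPn => // Pi.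
apply: le_trans (measureU2 _ _ _) _; [exact: mF|exact: bigsetU_measurable|].
exact: leeD2l.
Qed.

Section plane_measure.
Context {R : realType}.

(* No measurability is needed: [leb2] integrates Lebesgue outer measures of
   sections. *)
Lemma le_leb2 {A B : set (R * R)} : A `<=` B -> (leb2 A <= leb2 B)%E.
Proof.
move=> AB; rewrite /leb2 /product_measure1 !ge0_integralE//.
apply: ereal_sup_le => _ [h hA <-]; exists h => // x.
apply: le_trans (hA x) _; rewrite !patchT ?inE//.
by apply: le_outer_measure => y; rewrite /xsection/= !inE => /AB.
Qed.

Lemma area_ge0 (A : set (R * R)) : 0 <= area A.
Proof. exact/fine_ge0/measure_ge0. Qed.

(* [area] is [fine], which sends [+oo] to [0]; hence the hypothesis on [B]. *)
Lemma le_area {A B : set (R * R)} :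
  A `<=` B -> 0 < area B -> area A <= area B.
Proof.
have A0 : (0 <= leb2 A)%E by exact: measure_ge0.
rewrite /area => AB; move: (le_leb2 AB) A0.
by case: (leb2 A); case: (leb2 B) => //= x y; rewrite ?lee_fin ?ltxx// => _ ->.
Qed.

End plane_measure.

Section unit_squares.
Context {R : realType}.

Definition Q1o (m : int * int) : set (R * R) :=
  [set x | (m.1%:~R - 2^-1 < x.1 < m.1%:~R + 2^-1) /\
           (m.2%:~R - 2^-1 < x.2 < m.2%:~R + 2^-1)].

Lemma lebesgue_measure_unit_itv (c : R) (b1 b2 : bool) :
  lebesgue_measure [set` Interval (BSide b1 (c - 2^-1)) (BSide b2 (c + 2^-1))]
  = 1%E.
Proof.
rewrite lebesgue_measure_itv/= lte_fin ltrD2l gtrN ?invr_gt0// -EFinB.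
by congr (_%:E); field.
Qed.

Lemma Q1E m : Q1 m = [set` `[m.1%:~R - 2^-1, m.1%:~R + 2^-1]] `*`
                     [set` `[m.2%:~R - 2^-1, m.2%:~R + 2^-1]] :> set (R * R).
Proof. by apply/seteqP; split => x /=; rewrite !in_itv. Qed.

Lemma Q1oE m : Q1o m = [set` `]m.1%:~R - 2^-1, m.1%:~R + 2^-1[] `*`
                       [set` `]m.2%:~R - 2^-1, m.2%:~R + 2^-1[].
Proof. by apply/seteqP; split => x /=; rewrite !in_itv. Qed.

Lemma measurable_Q1 m : measurable (Q1 m : set (R * R)).
Proof. by rewrite Q1E; apply: measurableX; exact: measurable_itv. Qed.

Lemma measurable_Q1o m : measurable (Q1o m).
Proof. by rewrite Q1oE; apply: measurableX; exact: measurable_itv. Qed.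

Lemma leb2_Q1 m : leb2 (Q1 m : set (R * R)) = 1%E.
Proof.
by rewrite Q1E /leb2 product_measure1E //= !lebesgue_measure_unit_itv mule1.
Qed.

Lemma leb2_Q1o m : leb2 (Q1o m) = 1%E.
Proof.
by rewrite Q1oE /leb2 product_measure1E //= !lebesgue_measure_unit_itv mule1.
Qed.

Lemma leb2_Q1_boundary m : leb2 (Q1 m `\` Q1o m) = 0%E.
Proof.
have sub : Q1o m `<=` Q1 m.
  by move=> x /= [/andP[? ?] /andP[? ?]]; split; apply/andP; split; exact: ltW.
have -> : leb2 (Q1 m `\` Q1o m) = (leb2 (Q1 m) - leb2 (Q1 m `&` Q1o m))%E.
  apply: measureD; [exact: measurable_Q1|exact: measurable_Q1o|].
  by change (leb2 (Q1 m : set (R * R)) < +oo)%E; rewrite leb2_Q1 ltry.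
by rewrite setIidr // leb2_Q1 leb2_Q1o subee.
Qed.

Lemma eq_int_of_half_dist (u v : int) (y : R) :
  u%:~R - 2^-1 <= y <= u%:~R + 2^-1 -> v%:~R - 2^-1 < y < v%:~R + 2^-1 -> u = v.
Proof.
move=> /andP[uy yu] /andP[vy yv].
have : u%:~R < (v + 1)%:~R :> R by rewrite intrD; lra.
have : v%:~R < (u + 1)%:~R :> R by rewrite intrD; lra.
rewrite !ltr_int; lia.
Qed.

Lemma Q1_Q1o_eq {m m'} {x : R * R} : Q1 m x -> Q1o m' x -> m = m'.
Proof.
case: m m' => [m1 m2] [n1 n2] [/= h1 h2] [/= h3 h4].
by rewrite (eq_int_of_half_dist _ _ _ h1 h3) (eq_int_of_half_dist _ _ _ h2 h4).
Qed.

Lemma leb2_cover_boundary (Omega : set (R * R)) (M : seq (int * int)) :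
  Omega `<=` \bigcup_(m in [set` M]) Q1 m ->
  leb2 (Omega `\` \big[setU/set0]_(m <- M) Q1o m) = 0%E.
Proof.
move=> cover; apply/eqP; rewrite -measure_le0.
have sub : Omega `\` \big[setU/set0]_(m <- M) Q1o m `<=`
           \big[setU/set0]_(m <- M) (Q1 m `\` Q1o m).
  move=> x [/cover [m Mm Qx] Ux]; rewrite -bigcup_seq; exists m => //; split => // Qox.
  by apply: Ux; rewrite -bigcup_seq; exists m.
apply: le_trans (le_leb2 sub) _.
rewrite /leb2; apply: le_trans (le_measure_bigsetU _ _) _ => [m _|].
  by apply: measurableD; [exact: measurable_Q1|exact: measurable_Q1o].
by rewrite big1// => m _; exact: leb2_Q1_boundary.
Qed.

End unit_squares.

Section chernoff.
Context {R : realType} (r : nat).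

Lemma sum_bool_patterns (x y : R) :
  \sum_(f : {ffun 'I_r -> bool}) \prod_(j < r) (if f j then x else y) = (x + y) ^+ r.
Proof.
rewrite -(bigA_distr_bigA (fun _ (b : bool) => if b then x else y))/=.
by rewrite (eq_bigr (fun=> x + y)) ?prodr_const ?card_ord// => j _; rewrite big_bool.
Qed.

Lemma chernoff_patterns (p t c : R) : 0 <= p <= 1 -> 0 <= t ->
  \sum_(f : {ffun 'I_r -> bool} | c < #|[set j | f j]|%:R)
     \prod_(j < r) (if f j then p else 1 - p)
  <= expR (- (t * c)) * (p * expR t + (1 - p)) ^+ r.
Proof.
move=> /andP[p0 p1] t0.
pose g (f : {ffun 'I_r -> bool}) := \prod_(j < r) (if f j then p else 1 - p).
pose k (f : {ffun 'I_r -> bool}) := #|[set j | f j]|%:R : R.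
have g0 f : 0 <= g f.
  by apply: prodr_ge0 => j _; case: (f j); rewrite ?subr_ge0.
have markov : \sum_(f | c < k f) g f <= \sum_f g f * expR (t * (k f - c)).
  rewrite [leRHS](bigID (fun f => c < k f))/= -[leLHS]addr0 lerD//; last first.
    by apply: sumr_ge0 => f _; rewrite mulr_ge0 ?expR_ge0.
  apply: ler_sum => f cf; rewrite ler_peMr// -expR0 ler_expR.
  by rewrite mulr_ge0// subr_ge0 ltW.
have moment : \sum_f g f * expR (t * (k f - c)) =
              expR (- (t * c)) * (p * expR t + (1 - p)) ^+ r.
  rewrite -sum_bool_patterns mulr_sumr; apply: eq_bigr => f _.
  rewrite mulrBr expRD mulrA [RHS]mulrC -mulrN; congr (_ * _).
  rewrite /k [t * _]mulrC expRM_natl -prodr_const big_mkcond -big_split/=.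
  apply: eq_bigr => j _; rewrite (_ : j \in _ = f j).
    by case: (f j); rewrite ?mulr1.
  by apply/idP/idP; rewrite in_setE.
by rewrite -moment.
Qed.

Lemma binomial_tail_le (p A a : R) : 0 <= p <= 1 -> 0 < A -> p <= A^-1 ->
  A^-1 < a ->
  \sum_(f : {ffun 'I_r -> bool} | a * r%:R < #|[set j | f j]|%:R)
     \prod_(j < r) (if f j then p else 1 - p)
  <= expR (- (r%:R * (a * ln (a * A) - (a - A^-1)))).
Proof.
move=> p01 A0 pA aA.
have aA1 : 1 < a * A by rewrite -(mulVf (lt0r_neq0 A0)) ltr_pM2r.
have eln : expR (ln (a * A)) = a * A by rewrite lnK// posrE (lt_trans _ aA1).
apply: (le_trans (chernoff_patterns _ _ (a * r%:R) p01 (ltW (ln_gt0 aA1)))).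
have growth : p * (a * A - 1) <= a - A^-1.
  have -> : a - A^-1 = A^-1 * (a * A - 1) by field; exact: lt0r_neq0.
  by rewrite ler_wpM2r// subr_ge0 ltW.
apply: (le_trans (_ : _ <= expR (- (ln (a * A) * (a * r%:R))) *
                           expR (r%:R * (p * (a * A - 1))))).
  rewrite ler_wpM2l ?expR_ge0// expRM_natl lerXn2r ?nnegrE ?expR_ge0//.
    by rewrite addr_ge0 ?mulr_ge0 ?expR_ge0 ?subr_ge0//; case/andP: p01.
  by rewrite eln (_ : _ + _ = 1 + p * (a * A - 1)) ?expR_ge1Dx//; ring.
rewrite -expRD ler_expR.
have := ler_wpM2l (ler0n _ r) growth; lra.
Qed.

End chernoff.

Lemma N0_gt {R : realType} {T : Type} {r : nat} (lam : 'I_r -> T -> R * R)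
    (c : R) (w : T) :
  c < N0 lam w <-> exists m, c < (count_in lam m w)%:R.
Proof.
rewrite /N0; set S := [set _ | m in _].
have S0 : S !=set0 by exists (count_in lam (0, 0) w)%:R; exists (0, 0).
have Sub : has_ubound S.
  exists r%:R => _ [m _ <-]; rewrite ler_nat /count_in.
  by apply: leq_trans (max_card _) _; rewrite card_ord.
split; first by move/(sup_gt S0) => [_ [m _ <-] cm]; exists m.
by case=> m cm; apply: (lt_le_trans cm); apply: ub_le_sup => //; exists m.
Qed.

Definition outside_cover {R : realType} {T : Type} {r : nat}
    (lam : 'I_r -> T -> R * R) (M : seq (int * int)) : set T :=
  \big[setU/set0]_(j < r) lam j @^-1` ~` \big[setU/set0]_(m <- M) Q1o m.

Lemma N0_gt_subset_cover {R : realType} {T : Type} {r : nat}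
    (lam : 'I_r -> T -> R * R) (M : seq (int * int)) (c : R) : 0 <= c ->
  [set w | c < N0 lam w] `<=`
  \big[setU/set0]_(m <- M) [set w | c < (count_in lam m w)%:R]
  `|` outside_cover lam M.
Proof.
move=> c0 w /N0_gt [m cm].
have [j] : exists j, Q1 m (lam j w).
  have /card_gt0P [j] : (0 < count_in lam m w)%N.
    by rewrite -(ltr_nat R) (le_lt_trans c0).
  by rewrite in_setE => /asboolP; exists j.
have [/(_ j)|] := pselect (forall j, (\big[setU/set0]_(m <- M) Q1o m) (lam j w)).
  rewrite -bigcup_seq => -[m' Mm' Qom'] Qm.
  by left; rewrite -bigcup_seq; exists m; rewrite // (Q1_Q1o_eq Qm Qom').
move=> /existsNP [k Uk] _; right; rewrite /outside_cover -bigcup_seq.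
by exists k; rewrite /= ?mem_index_enum.
Qed.

Section independent_sample.
Context {R : realType} {d : measure_display} {T : measurableType d}.
Context {P : probability T R} {r : nat} {lam : 'I_r -> T -> R * R}.
Hypothesis mlam : forall j, measurable_fun setT (lam j).
Hypothesis indep : mutually_independent P lam.

Lemma measurable_lam_preimage j B : measurable B -> measurable (lam j @^-1` B).
Proof. by move=> mB; rewrite -[X in measurable X]setTI; exact: mlam. Qed.

Definition pattern_event (Q : set (R * R)) (f : {ffun 'I_r -> bool}) : set T :=
  [set w | forall j, (if f j then Q else ~` Q) (lam j w)].

Lemma measurable_pattern_event {Q} f : measurable Q -> measurable (pattern_event Q f).
Proof.
move=> mQ; have -> : pattern_event Q f =
    \big[setI/setT]_(j <- index_enum 'I_r) lam j @^-1` (if f j then Q else ~` Q).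
  rewrite -bigcap_seq; apply/seteqP; split => w /= Qw j; first by move=> _; exact: Qw.
  by apply: Qw; rewrite /= mem_index_enum.
apply: bigsetI_measurable => j _; apply: measurable_lam_preimage.
by case: (f j); [exact: mQ|exact: measurableC].
Qed.

Lemma probability_pattern_event {Q} (p : R) f : measurable Q ->
  (forall j, P (lam j @^-1` Q) = p%:E) ->
  P (pattern_event Q f) = (\prod_(j < r) (if f j then p else 1 - p))%:E.
Proof.
move=> mQ Pj; have mQf j : measurable (if f j then Q else ~` Q).
  by case: (f j); [exact: mQ|exact: measurableC].
rewrite /pattern_event (indep _ mQf); congr EFin.
apply: eq_bigr => j _; case: (f j); first by rewrite Pj.
by rewrite -preimage_setC probability_setC ?Pj//; exact: measurable_lam_preimage.
Qed.

Lemma count_gt_patterns (Q : set (R * R)) (c : R) :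
  [set w | c < #|[set j : 'I_r | `[< Q (lam j w) >]]|%:R] =
  \big[setU/set0]_(f : {ffun 'I_r -> bool} | c < #|[set j | f j]|%:R) pattern_event Q f.
Proof.
rewrite -bigcup_seq_cond; apply/seteqP; split => w /=.
  move=> cw; exists [ffun j => `[< Q (lam j w) >]].
    by rewrite /= mem_index_enum/=; under eq_set => j do rewrite ffunE.
  by move=> j; rewrite ffunE; case: asboolP.
move=> [f /andP[_ cf] fw]; rewrite (_ : [set j | _] = [set j | f j])//.
apply/eq_set => j.
by move: (fw j); case: (f j) => Qj; [rewrite asboolT|rewrite asboolF].
Qed.

Lemma measurable_count_gt {Q} (c : R) : measurable Q ->
  measurable [set w | c < #|[set j : 'I_r | `[< Q (lam j w) >]]|%:R].
Proof.
move=> mQ; rewrite count_gt_patterns; apply: bigsetU_measurable => f _.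
exact: measurable_pattern_event.
Qed.

Lemma probability_count_gt_le {Q} (c p : R) : measurable Q ->
  (forall j, P (lam j @^-1` Q) = p%:E) ->
  (P [set w | (c < #|[set j : 'I_r | `[< Q (lam j w) >]]|%:R)%R] <=
   (\sum_(f : {ffun 'I_r -> bool} | c < #|[set j | f j]|%:R)
      \prod_(j < r) (if f j then p else 1 - p))%:E)%E.
Proof.
move=> mQ Pj; rewrite count_gt_patterns -sumEFin.
apply: le_trans (le_measure_bigsetU _ (fun f _ => measurable_pattern_event f mQ)) _.
by apply: lee_sum => f _; rewrite -(probability_pattern_event _ f mQ Pj).
Qed.

Lemma measurable_N0_gt (c : R) : measurable [set w | c < N0 lam w].
Proof.
have -> : [set w | c < N0 lam w] = \bigcup_m [set w | c < (count_in lam m w)%:R].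
  apply/seteqP; split => w /=; first by move/N0_gt => [m cm]; exists m.
  by move=> [m _ cm]; apply/N0_gt; exists m.
apply: countable_bigcupT_measurable => [|m]; first exact: countableP.
exact: measurable_count_gt (measurable_Q1 m).
Qed.

Context {Omega : set (R * R)}.
Hypothesis unif : forall j, uniform_in P (lam j) Omega.
Hypothesis Omega_gt0 : 0 < area Omega.

Lemma probability_count_in_gt (a : R) m : (area Omega)^-1 < a ->
  (P [set w | (a * r%:R < (count_in lam m w)%:R)%R] <=
   (expR (- (r%:R * (a * ln (a * area Omega) - (a - (area Omega)^-1)))))%:E)%E.
Proof.
move=> aA; set p := area (Q1 m `&` Omega) / area Omega.
have Pj j : P (lam j @^-1` Q1 m) = p%:E by rewrite (unif j).2//; exact: measurable_Q1.
have area_Q1 : area (Q1 m : set (R * R)) = 1 by rewrite /area leb2_Q1.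
have mass_le1 : area (Q1 m `&` Omega) <= 1 by rewrite -area_Q1 le_area ?area_Q1.
have p01 : 0 <= p <= 1.
  by rewrite divr_ge0 ?area_ge0 ?(ltW Omega_gt0)//= ler_pdivrMr// mul1r le_area.
have pA : p <= (area Omega)^-1 by rewrite -[leRHS]mul1r ler_wpM2r ?invr_ge0 ?area_ge0.
apply: le_trans (probability_count_gt_le _ _ (measurable_Q1 m) Pj) _.
by rewrite lee_fin binomial_tail_le.
Qed.

Lemma measurable_outside_cover M : measurable (outside_cover lam M).
Proof.
apply: bigsetU_measurable => j _; apply/measurable_lam_preimage/measurableC.
by apply: bigsetU_measurable => m _; exact: measurable_Q1o.
Qed.

Lemma probability_outside_cover (M : seq (int * int)) :
  Omega `<=` \bigcup_(m in [set` M]) Q1 m -> P (outside_cover lam M) = 0%E.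
Proof.
move=> cover; apply/eqP; rewrite -measure_le0.
apply: le_trans (le_measure_bigsetU _ _) _ => [j _|].
  apply/measurable_lam_preimage/measurableC.
  by apply: bigsetU_measurable => m _; exact: measurable_Q1o.
rewrite big1// => j _ /=; rewrite (unif j).2; last first.
  by apply/measurableC/bigsetU_measurable => m _; exact: measurable_Q1o.
by rewrite setIC -setDE /area leb2_cover_boundary// mul0r.
Qed.

Lemma probability_N0_gt_le_sum {M : seq (int * int)} {c : R} : 0 <= c ->
  Omega `<=` \bigcup_(m in [set` M]) Q1 m ->
  (P [set w | (c < N0 lam w)%R] <=
   \sum_(m <- M) P [set w | (c < (count_in lam m w)%:R)%R])%E.
Proof.
move=> c0 cover.
have mC m : measurable [set w | c < (count_in lam m w)%:R].
  exact: measurable_count_gt (measurable_Q1 m).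
apply: le_trans (le_measure _ _ _ (N0_gt_subset_cover lam M _ c0)) _.
- by rewrite inE; exact: measurable_N0_gt.
- rewrite inE; apply: measurableU; last exact: measurable_outside_cover.
  exact: bigsetU_measurable.
apply: le_trans (measureU2 _ _ (measurable_outside_cover M)) _.
  exact: bigsetU_measurable.
rewrite [X in (_ + X)%E](_ : _ = 0%E) ?adde0; last exact: probability_outside_cover.
exact: le_measure_bigsetU.
Qed.

End independent_sample.

Theorem lemma4p6 (R : realType) (Omega : set (R * R)) (eps1 : R)
  (d : measure_display) (T : measurableType d) (P : probability T R)
  (r : nat) (lam : 'I_r -> T -> R * R) (a : R) :
  compact Omega ->
  0 < area Omega ->
  0 <= eps1 ->
  covered_by_at_most Omega (area Omega + eps1) ->
  (forall j, uniform_in P (lam j) Omega) ->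
  mutually_independent P lam ->
  (area Omega)^-1 < a ->
  (P [set w | (a * r%:R < N0 lam w)%R] <=
  ((area Omega + eps1) *
     expR (- (r%:R * (a * ln (a * area Omega) - (a - (area Omega)^-1)))))%:E)%E.
Proof.
move=> _ Omega_gt0 _ [M [cover sizeM]] unif indep aA.
have mlam j : measurable_fun setT (lam j) := (unif j).1.
pose bound := expR (- (r%:R * (a * ln (a * area Omega) - (a - (area Omega)^-1)))).
have a_r_ge0 : 0 <= a * r%:R by rewrite mulr_ge0 ?ler0n// ltW// (lt_trans _ aA) ?invr_gt0.
apply: le_trans (probability_N0_gt_le_sum mlam unif a_r_ge0 cover) _.
apply: le_trans (_ : _ <= \sum_(m <- M) bound%:E)%E _.
  by apply: lee_sum => m _; exact: probability_count_in_gt.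
rewrite sumEFin lee_fin big_const_seq count_predT iter_addr addr0.
by rewrite -[bound *+ _]mulr_natl ler_wpM2r ?expR_ge0.
Qed.
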